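(* Let $a,r$ be real numbers with $0<a<a+r<1$ and let $c=b_{\mathbb{D},2}(a,a+r)$. Let $R$ be a number satisfying $b_{\mathbb{D},2}(a,a-R)=c$ and $-1<a-R<a$. Then \[ B_{\mathbb{D},2}(a;c)\subset\{z:|z-a|<R\}\cap\mathbb{D}. \]
   Context: $\mathbb{D}=\{z\in\mathbb{C}:|z|<1\}$. For $z_1,z_2\in\mathbb{D}$, $b_{\mathbb{D},2}(z_1,z_2)=\sup_{z\in\partial\mathbb{D}}\frac{|z_1-z_2|}{\sqrt{|z_1-z|^2+|z-z_2|^2}}$, and $B_{\mathbb{D},2}(a;c)=\{z\in\mathbb{D}: b_{\mathbb{D},2}(a,z)<c\}$. *)

From Stdlib Require Import Reals.
From Coquelicot Require Import Coquelicot.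
Open Scope R_scope.

Definition in_disk (z : C) : Prop := Cmod z < 1.

Definition b2_values (z1 z2 : C) (t : R) : Prop :=
  exists z : C, Cmod z = 1 /\
    t = Cmod (Cminus z1 z2) / sqrt ((Cmod (Cminus z1 z)) ^ 2 + (Cmod (Cminus z z2)) ^ 2).

(* b_{D,2}(z1,z2) = sup over the unit circle (finite for z1, z2 in D). *)
Definition b_D2 (z1 z2 : C) : R := real (Lub_Rbar (b2_values z1 z2)).

Definition B_D2 (a : C) (c : R) (z : C) : Prop := in_disk z /\ b_D2 a z < c.

(* The parallelogram law gives |z1 - u|^2 + |u - z2|^2 = 2|u - m|^2 + |z1 - z2|^2/2
   with m the midpoint of z1 and z2, and on the unit circle |u - m| is minimised at
   distance 1 - |m|.  Hence b_{D,2}(z1, z2) = d / sqrt(2 s^2 + d^2/2) with d = |z1 - z2|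
   and s = 1 - |m|, a decreasing function of s/d.  For z with |z - a| = d >= R, the
   midpoint satisfies |m| >= |a - d/2|, and t |-> (1 - |a - t/2|)/t is nonincreasing, so
   s/d for the pair (a, z) is at most s/d for the pair (a, a - R); thus
   b_{D,2}(a, z) >= b_{D,2}(a, a - R) = c and z lies outside the ball. *)
From Stdlib Require Import Reals Lra.
From Coquelicot Require Import Coquelicot.
Open Scope R_scope.

Definition midpoint (z1 z2 : C) : C := (/ 2 * (z1 + z2))%C.

Definition b2_profile (s d : R) : R := d / sqrt (2 * s ^ 2 + d ^ 2 / 2).

Lemma Lub_Rbar_max (E : R -> Prop) (x : R) :
  E x -> (forall t, E t -> t <= x) -> real (Lub_Rbar E) = x.
Proof.
  intros Ex Hub.
  rewrite (is_lub_Rbar_unique E x); [reflexivity |].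
  split.
  - intros t Et; exact (Hub t Et).
  - intros M HM; exact (HM x Ex).
Qed.

Lemma Rdiv_sqrt_le (d1 S1 d2 S2 : R) :
  0 <= d1 -> 0 < S1 -> 0 <= d2 -> 0 < S2 ->
  d1 ^ 2 * S2 <= d2 ^ 2 * S1 -> d1 / sqrt S1 <= d2 / sqrt S2.
Proof.
  intros Hd1 HS1 Hd2 HS2 Hle.
  assert (Hsqrt : d1 * sqrt S2 <= d2 * sqrt S1).
  { rewrite <- (sqrt_pow2 d1), <- (sqrt_pow2 d2), <- !sqrt_mult_alt by nra.
    apply sqrt_le_1_alt; exact Hle. }
  assert (s1 := sqrt_lt_R0 _ HS1). assert (s2 := sqrt_lt_R0 _ HS2).
  apply (Rmult_le_reg_r (sqrt S1 * sqrt S2)); [nra |].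
  replace (d1 / sqrt S1 * (sqrt S1 * sqrt S2)) with (d1 * sqrt S2) by (field; lra).
  replace (d2 / sqrt S2 * (sqrt S1 * sqrt S2)) with (d2 * sqrt S1) by (field; lra).
  exact Hsqrt.
Qed.

Lemma b2_profile_le (s d s' d' : R) :
  0 <= s -> 0 < d -> 0 <= s' -> 0 < d' -> s * d' <= s' * d ->
  b2_profile s' d' <= b2_profile s d.
Proof.
  intros Hs Hd Hs' Hd' Hle.
  unfold b2_profile; apply Rdiv_sqrt_le; try nra.
  assert (Hsq : (s * d') ^ 2 <= (s' * d) ^ 2)
    by (apply pow_incr; split; [apply Rmult_le_pos; lra | exact Hle]).
  nra.
Qed.

Lemma Cmod_sqr_sum_midpoint (z1 z2 u : C) :
  Cmod (z1 - u) ^ 2 + Cmod (u - z2) ^ 2 =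
  2 * Cmod (u - midpoint z1 z2) ^ 2 + Cmod (z1 - z2) ^ 2 / 2.
Proof.
  rewrite !Cmod2_alt.
  destruct z1 as [x1 y1], z2 as [x2 y2], u as [p q].
  unfold midpoint; simpl; field.
Qed.

Lemma Cmod_midpoint_lt_1 (z1 z2 : C) :
  in_disk z1 -> in_disk z2 -> Cmod (midpoint z1 z2) < 1.
Proof.
  unfold in_disk, midpoint; intros H1 H2.
  rewrite Cmod_mult, <- RtoC_inv, Cmod_R, Rabs_pos_eq by lra.
  pose proof (Cmod_triangle z1 z2).
  lra.
Qed.

Lemma unit_circle_dist_ge (u m : C) : Cmod u = 1 -> 1 - Cmod m <= Cmod (u - m).
Proof.
  intros Hu.
  pose proof (Cmod_triangle (u - m) m) as Htri.
  replace (u - m + m)%C with u in Htri by ring.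
  lra.
Qed.

Lemma unit_circle_nearest (m : C) :
  Cmod m <= 1 -> exists u, Cmod u = 1 /\ Cmod (u - m) = 1 - Cmod m.
Proof.
  intros Hm.
  destruct (Req_dec (Cmod m) 0) as [H0 | H0].
  - exists 1%C.
    rewrite (Cmod_eq_0 m H0), Cmod_0, <- RtoC_minus, !Cmod_R.
    split; apply Rabs_pos_eq; lra.
  - assert (Hpos : 0 < Cmod m) by (pose proof (Cmod_ge_0 m); lra).
    exists (/ Cmod m * m)%C.
    replace (/ Cmod m * m - m)%C with ((/ Cmod m - 1) * m)%C by ring.
    rewrite !Cmod_mult, <- RtoC_inv, <- RtoC_minus, !Cmod_R by exact H0.
    assert (Hinv : 1 <= / Cmod m)
      by (rewrite <- Rinv_1; apply Rinv_le_contravar; lra).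
    rewrite !Rabs_pos_eq by lra.
    split; field; exact H0.
Qed.

Lemma b_D2_closed_form (z1 z2 : C) :
  in_disk z1 -> in_disk z2 ->
  b_D2 z1 z2 = b2_profile (1 - Cmod (midpoint z1 z2)) (Cmod (z1 - z2)).
Proof.
  intros H1 H2.
  assert (Hm := Cmod_midpoint_lt_1 z1 z2 H1 H2).
  set (m := midpoint z1 z2) in *.
  set (d := Cmod (z1 - z2)).
  destruct (unit_circle_nearest m) as [u0 [Hu0 Hdu0]]; [lra |].
  apply Lub_Rbar_max.
  - exists u0; split; [exact Hu0 |].
    rewrite Cmod_sqr_sum_midpoint; fold m d; rewrite Hdu0; reflexivity.
  - intros t [u [Hu ->]].
    rewrite Cmod_sqr_sum_midpoint; fold m d.
    assert (Hd : 0 <= d) by apply Cmod_ge_0.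
    assert (Hdist : (1 - Cmod m) ^ 2 <= Cmod (u - m) ^ 2)
      by (apply pow_incr; pose proof (unit_circle_dist_ge u m Hu); lra).
    apply Rdiv_sqrt_le; try nra.
Qed.

Lemma Cmod_midpoint_ge (a : R) (z : C) :
  0 <= a -> Rabs (a - Cmod (z - a) / 2) <= Cmod (midpoint a z).
Proof.
  intros Ha.
  rewrite <- (Rabs_pos_eq (Cmod (midpoint a z))) by apply Cmod_ge_0.
  apply Rsqr_le_abs_0; unfold Rsqr.
  assert (Hre := re_le_Cmod (z - a)).
  assert (Hd := Cmod2_alt (z - a)).
  set (d := Cmod (z - a)) in *.
  destruct z as [x y]; simpl in Hre, Hd.
  assert (Hm : Cmod (midpoint a (x, y)) ^ 2 = ((a + x) / 2) ^ 2 + (y / 2) ^ 2)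
    by (rewrite Cmod2_alt; unfold midpoint; simpl; field).
  assert (Hx : a - x <= d) by (pose proof (Rabs_maj2 (x + - a)); lra).
  nra.
Qed.

Lemma boundary_gap_ratio_antitone (a s t : R) :
  -1 < a < 1 -> 0 < s <= t ->
  (1 - Rabs (a - t / 2)) * s <= (1 - Rabs (a - s / 2)) * t.
Proof.
  intros Ha Hst.
  unfold Rabs; destruct (Rcase_abs (a - t / 2)), (Rcase_abs (a - s / 2)); nra.
Qed.

Lemma b_D2_real_le_far (a R0 : R) (z : C) :
  0 <= a < 1 -> 0 < R0 -> -1 < a - R0 -> in_disk z -> R0 <= Cmod (z - a) ->
  b_D2 a (RtoC (a - R0)) <= b_D2 a z.
Proof.
  intros Ha HR0 HaR0 Hz Hd.
  assert (Hdisk : forall x, -1 < x < 1 -> in_disk (RtoC x)).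
  { intros x Hx; unfold in_disk; rewrite Cmod_R; apply Rabs_def1; lra. }
  rewrite !b_D2_closed_form by (exact Hz || apply Hdisk; lra).
  replace (midpoint a (RtoC (a - R0))) with (RtoC (a - R0 / 2))
    by (unfold midpoint, Cmult, Cplus, Cinv, RtoC; simpl; f_equal; field).
  rewrite <- RtoC_minus, !Cmod_R.
  replace (a - (a - R0)) with R0 by ring.
  rewrite (Rabs_pos_eq R0) by lra.
  replace (Cmod (a - z)) with (Cmod (z - a))
    by (rewrite <- Cmod_opp; f_equal; ring).
  assert (Hmid := Cmod_midpoint_ge a z (proj1 Ha)).
  assert (Hm := Cmod_midpoint_lt_1 a z (Hdisk a ltac:(lra)) Hz).
  assert (Hgap := boundary_gap_ratio_antitone a R0 (Cmod (z - a)) ltac:(lra) ltac:(lra)).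
  assert (HR0gap : Rabs (a - R0 / 2) < 1) by (apply Rabs_def1; lra).
  apply b2_profile_le; nra.
Qed.

Theorem theorem3p17 (a r R0 : R) :
  0 < a -> a < a + r -> a + r < 1 ->
  b_D2 (RtoC a) (RtoC (a - R0)) = b_D2 (RtoC a) (RtoC (a + r)) ->
  -1 < a - R0 -> a - R0 < a ->
  forall z : C, B_D2 (RtoC a) (b_D2 (RtoC a) (RtoC (a + r))) z ->
    Cmod (Cminus z (RtoC a)) < R0 /\ in_disk z.
Proof.
  intros Ha Har Har1 Heq HR1 HR2 z [Hz Hb].
  split; [| exact Hz].
  apply Rnot_le_lt; intros Hfar.
  rewrite <- Heq in Hb.
  assert (Hge := b_D2_real_le_far a R0 z ltac:(lra) ltac:(lra) HR1 Hz Hfar).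
  lra.
Qed.
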